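(* Let $G=(V,E)$ be a connected, locally finite, undirected graph, let $s:V\to\mathbb{R}$, and let $u_\infty$ be the odometer of $s$. Then for all $x\in V$, $$u_\infty(x)=\sup\{\ell_\infty(x): \ell \text{ is a legal toppling procedure for } s\}.$$
   Context: $\Delta u(x)=\sum_{y\sim x}(u(y)-u(x))$; $\mathcal{F}_s=\{f:V\to\mathbb{R}: f\ge0,\ s+\Delta f\le1\}$; the odometer is $u_\infty(x)=\inf\{f(x):f\in\mathcal{F}_s\}$ with $\inf\emptyset=\infty$. A toppling procedure is given by a well-ordered closed set $T\subset[0,\infty)$ with $0\in T$ and a function $(t,x)\mapsto u_t(x)\in[0,\infty)$ on $T\times V$ such that $u_0=0$, $u_t(x)$ is nondecreasing in $t$, and $t_n\uparrow t$ implies $u_{t_n}(x)\uparrow u_t(x)$. With $s_t=s+\Delta u_t$ and $t^-=\sup\{r\in T:r<t\}$, it is legal for $s$ if $u_t(x)-u_{t^-}(x)\le (s_{t^-}(x)-1)^+/\deg(x)$ for all $x$ and $t\in T\setminus\{0\}$. Write $\ell_\infty(x)=\lim_{t\to\sup T}\ell_t(x)\in[0,\infty]$. *)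

From HB Require Import structures.
From mathcomp Require Import all_boot all_order all_algebra.
From mathcomp Require Import all_classical all_reals all_analysis.
Set Implicit Arguments. Unset Strict Implicit. Unset Printing Implicit Defensive.
Import Order.TTheory GRing.Theory Num.Theory.
Import numFieldNormedType.Exports.
Local Open Scope classical_set_scope.
Local Open Scope ring_scope.

(* A locally finite undirected simple graph on vertex type V is given by its
   (finite, duplicate-free) neighbour lists: y ~ x  iff  y \in nbr x. *)
Definition undirected_locally_finite (V : eqType) (nbr : V -> seq V) : Prop :=
  (forall x, uniq (nbr x)) /\
  (forall x y, (y \in nbr x) = (x \in nbr y)) /\
  (forall x, x \notin nbr x).

Definition graph_connected (V : eqType) (nbr : V -> seq V) : Prop :=
  forall x y : V, exists p : seq V,
    path (fun a b => b \in nbr a) x p /\ last x p = y.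

Definition deg (V : eqType) (nbr : V -> seq V) (x : V) : nat := size (nbr x).

Definition laplacian (R : realType) (V : eqType) (nbr : V -> seq V)
  (f : V -> R) (x : V) : R := \sum_(y <- nbr x) (f y - f x).

Definition Fs (R : realType) (V : eqType) (nbr : V -> seq V) (s : V -> R) :
  set (V -> R) :=
  [set f | (forall x, 0 <= f x) /\ (forall x, s x + laplacian nbr f x <= 1)].

(* Odometer: u_oo(x) = inf { f(x) : f in F_s }, inf of the empty set = +oo. *)
Definition odometer (R : realType) (V : eqType) (nbr : V -> seq V) (s : V -> R)
  (x : V) : \bar R :=
  ereal_inf [set (f x)%:E | f in Fs nbr s].

Definition well_ordered_set (R : realType) (T : set R) : Prop :=
  forall A : set R, A `<=` T -> A !=set0 ->
    exists2 m, A m & forall a, A a -> m <= a.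

(* Toppling procedure (T, u): u t x = u_t(x); only values for t in T matter. *)
Definition toppling_procedure (R : realType) (V : eqType)
  (T : set R) (u : R -> V -> R) : Prop :=
  [/\ well_ordered_set T, closed T, T 0 & T `<=` [set t | 0 <= t]] /\
  [/\ (forall x, u 0 x = 0),
      (forall t x, T t -> 0 <= u t x),
      (forall t r x, T t -> T r -> t <= r -> u t x <= u r x) &
      (forall (tn : nat -> R) (t : R), (forall n, T (tn n)) ->
          {homo tn : n m / (n <= m)%N >-> n <= m} ->
          tn @ \oo --> t ->
          forall x, (fun n => u (tn n) x) @ \oo --> u t x)].

Definition tminus (R : realType) (T : set R) (t : R) : R :=
  sup [set r | T r /\ r < t].

Definition s_at (R : realType) (V : eqType) (nbr : V -> seq V) (s : V -> R)
  (u : R -> V -> R) (t : R) (x : V) : R := s x + laplacian nbr (u t) x.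

Definition legal (R : realType) (V : eqType) (nbr : V -> seq V) (s : V -> R)
  (T : set R) (u : R -> V -> R) : Prop :=
  forall t x, T t -> t != 0 ->
    u t x - u (tminus T t) x <=
      Num.max 0 (s_at nbr s u (tminus T t) x - 1) / (deg nbr x)%:R.

(* l_oo(x) = lim_{t -> sup T} l_t(x); as l_t(x) is nondecreasing on T,
   this limit is the supremum over T, in [0, +oo]. *)
Definition final_value (R : realType) (V : eqType) (T : set R)
  (u : R -> V -> R) (x : V) : \bar R :=
  ereal_sup [set (u t x)%:E | t in T].

From mathcomp Require Import all_boot all_order all_algebra.
From mathcomp Require Import all_classical all_reals all_analysis.
From mathcomp Require Import lra.
Set Implicit Arguments. Unset Strict Implicit. Unset Printing Implicit Defensive.
Import Order.TTheory GRing.Theory Num.Theory.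
Import numFieldNormedType.Exports.
Local Open Scope classical_set_scope.
Local Open Scope ring_scope.

(* Every legal procedure stays below every f in F_s: by induction along the
   well-ordered time set, at a time with a strict predecessor t^- the legality
   bound combined with s + Delta f <= 1 keeps u_t <= f, and at a limit time
   continuity does.  Conversely, parallel toppling at integer times is legal.
   If it stays bounded at every vertex, its limit lies in F_s; if it is
   unbounded at some vertex, then it is unbounded at every vertex, because a
   vertex topples at least as much as any of its neighbours receives, and the
   graph is connected; either way its final value dominates u_oo. *)

Section RealSets.
Variable R : realType.

Lemma well_ordered_ind (T : set R) (P : R -> Prop) :
  well_ordered_set T ->
  (forall t, T t -> (forall r, T r -> r < t -> P r) -> P t) ->
  forall t, T t -> P t.
Proof.
move=> woT IH t Tt; apply: contrapT => NPt.
have [m [Tm NPm] minm] :=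
  woT [set r | T r /\ ~ P r] (fun r (h : T r /\ _) => h.1)
    (ex_intro _ t (conj Tt NPt)).
apply: NPm; apply: IH => // r Tr rm; apply: contrapT => NPr.
by have := minm r (conj Tr NPr); rewrite leNgt rm.
Qed.

Lemma tminus_mem_le (T : set R) (t : R) : closed T -> T 0 -> 0 < t ->
  T (tminus T t) /\ tminus T t <= t.
Proof.
move=> clT T0 t_gt0; pose B := [set r | T r /\ r < t].
have B0 : B !=set0 by exists 0.
have Bub : has_ubound B by exists t => r [_ /ltW].
split; last by apply: ge_sup => // r [_ /ltW].
apply: clT; apply: (closureS (A := B)); first by move=> r [].
exact: closure_sup.
Qed.

Lemma nondecreasing_cvg_sup (B : set R) : B !=set0 -> has_ubound B ->
  exists tn : nat -> R, [/\ forall n, B (tn n),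
    {homo tn : n m / (n <= m)%N >-> n <= m} & tn @ \oo --> sup B].
Proof.
move=> B0 Bub.
have near_sup n : {r | B r & sup B - n.+1%:R^-1 < r}.
  by apply: cid2; apply: sup_adherent.
pose r n := s2val (near_sup n).
(* running maximum of the [r n], to make the sequence monotone *)
pose fix tn n := if n is k.+1 then Num.max (tn k) (r k.+1) else r 0%N.
have tnB n : B (tn n).
  elim: n => [|n IH] /=; first exact: (s2valP (near_sup 0%N)).
  by case: leP => _ //; exact: (s2valP (near_sup n.+1)).
have r_le_tn n : r n <= tn n by case: n => [|n] //=; rewrite le_max lexx orbT.
exists tn; split => //.
  by apply/nondecreasing_seqP => n /=; rewrite le_max lexx.
apply: (@squeeze_cvgr _ _ _ _ (fun n => sup B - n.+1%:R^-1) (fun _ => sup B)).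
- near=> n; apply/andP; split.
    exact/ltW/(lt_le_trans (s2valP' (near_sup n)) (r_le_tn n)).
  exact: sup_upper_bound.
- rewrite -[X in _ --> X]subr0; apply: cvgB; first exact: cvg_cst.
  exact: cvg_harmonic.
- exact: cvg_cst.
Unshelve. all: by end_near.
Qed.

Definition naturals : set R := [set t | exists n : nat, t = n%:R].

Lemma eq_nat_of_dist_lt1 (a b : nat) : `|a%:R - b%:R : R| < 1 -> a = b.
Proof.
rewrite ltr_norml => /andP[ba ab].
case: (ltngtP a b) => // lt; exfalso;
  [have : a.+1%:R <= b%:R :> R by rewrite ler_nat
  |have : b.+1%:R <= a%:R :> R by rewrite ler_nat];
by rewrite -natr1; lra.
Qed.

Lemma closed_naturals : closed naturals.
Proof.
move=> t t_cl; have half_gt0 : 0 < 2^-1 :> R by rewrite invr_gt0.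
have [_ [[k ->] tk]] := t_cl _ (nbhsx_ballx t _ half_gt0).
have [->|t_neq_k] := eqVneq t k%:R; first by exists k.
have tk_gt0 : 0 < `|t - k%:R| by rewrite normr_gt0 subr_eq0.
have [_ [[j ->] tj]] := t_cl _ (nbhsx_ballx t _ tk_gt0).
rewrite /ball /= in tk tj.
suff kj : k = j by rewrite kj ltxx in tj.
apply: eq_nat_of_dist_lt1; rewrite (le_lt_trans (ler_distD t _ _)) //.
rewrite distrC; lra.
Qed.

Lemma well_ordered_naturals : well_ordered_set naturals.
Proof.
move=> A A_nat [a Aa]; have [n an] := A_nat a Aa; rewrite an in Aa.
have exA : exists n, `[< A n%:R >] by exists n; apply/asboolP.
case: (ex_minnP exA) => m /asboolP Am m_min.
exists m%:R => // b Ab; have [j bj] := A_nat b Ab; rewrite bj ler_nat.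
by apply: m_min; apply/asboolP; rewrite -bj.
Qed.

Lemma cvg_naturals_near_eq (tn : nat -> R) (t : R) :
  (forall n, naturals (tn n)) -> tn @ \oo --> t ->
  \forall n \near \oo, tn n = t.
Proof.
move=> tn_nat tn_cvg.
have [k tk] : naturals t.
  by apply: closed_cvg tn_cvg; [exact: closed_naturals | exact: nearW].
move/cvgrPdist_lt/(_ 1 ltr01): tn_cvg; apply: filterS => n.
by have [j ->] := tn_nat n; rewrite tk distrC => /eq_nat_of_dist_lt1 ->.
Qed.

Lemma tminus_naturalsS (n : nat) : tminus naturals n.+1%:R = n%:R.
Proof.
have nB : [set r | naturals r /\ r < n.+1%:R] n%:R.
  by split; [exists n | rewrite ltr_nat].
apply/eqP; rewrite eq_le; apply/andP; split.
  by apply: ge_sup => [|r [[j ->]]]; [exists n%:R | rewrite ltr_nat ler_nat].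
apply: sup_upper_bound => //; split; first by exists n%:R.
by exists n.+1%:R => r [_ /ltW].
Qed.

End RealSets.

Section Toppling.
Variables (R : realType) (V : eqType) (nbr : V -> seq V) (s : V -> R).
Hypothesis deg_gt0 : forall x, (0 < deg nbr x)%N.

Lemma laplacianE (f : V -> R) (x : V) :
  laplacian nbr f x = \sum_(y <- nbr x) f y - (deg nbr x)%:R * f x.
Proof.
by rewrite /laplacian sumrB big_const_seq count_predT iter_addr_0 mulr_natl.
Qed.

(* One legal toppling of every vertex at once: this is the largest step the
   legality condition allows from the configuration [g]. *)
Definition topple (g : V -> R) (x : V) : R :=
  g x + Num.max 0 (s x + laplacian nbr g x - 1) / (deg nbr x)%:R.

Lemma le_topple (g : V -> R) (x : V) : g x <= topple g x.
Proof. by rewrite lerDl divr_ge0 // le_max lexx. Qed.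

Lemma legal_le_topple (T : set R) (u : R -> V -> R) (t : R) (x : V) :
  legal nbr s T u -> T t -> t != 0 -> u t x <= topple (u (tminus T t)) x.
Proof. by move=> leg Tt t0; rewrite -lerBlDl; exact: leg. Qed.

Lemma topple_le_Fs (f g : V -> R) (x : V) :
  Fs nbr s f -> (forall y, g y <= f y) -> topple g x <= f x.
Proof.
move=> [_ f_le1] gf; have d_gt0 : 0 < (deg nbr x)%:R :> R by rewrite ltr0n.
rewrite -lerBrDl ler_pdivrMr // ge_max; apply/andP; split.
  by rewrite mulr_ge0 ?subr_ge0 ?ler0n ?gf.
have := f_le1 x; rewrite !laplacianE.
have : \sum_(y <- nbr x) g y <= \sum_(y <- nbr x) f y by apply: ler_sum.
have := gf x; nra.
Qed.

Section LegalBelowFs.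
Variables (T : set R) (u : R -> V -> R) (f : V -> R).
Hypotheses (procT : toppling_procedure T u) (legT : legal nbr s T u)
  (Ff : Fs nbr s f).

Lemma legal_le_Fs_step (t : R) : T t ->
  (forall r, T r -> r < t -> forall y, u r y <= f y) -> forall x, u t x <= f x.
Proof.
have [[_ clT T0 T_ge0] [u0 _ _ u_cont]] := procT.
move=> Tt below x; have [->|t0] := eqVneq t 0; first by rewrite u0 (Ff.1 x).
have t_gt0 : 0 < t by rewrite lt_def t0 T_ge0.
have [Tp p_le_t] := tminus_mem_le clT T0 t_gt0.
have [p_lt_t|p_ge_t] := ltP (tminus T t) t.
  apply: le_trans (legal_le_topple x legT Tt t0) _.
  exact: topple_le_Fs Ff (below _ Tp p_lt_t).
(* [t] is a limit of earlier times: pass to the limit along them *)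
have B0 : [set r | T r /\ r < t] !=set0 by exists 0.
have Bub : has_ubound [set r | T r /\ r < t] by exists t => r [_ /ltW].
have [tn [tnB tn_mono tn_cvg]] := nondecreasing_cvg_sup B0 Bub.
have tp : tminus T t = t by apply/eqP; rewrite eq_le p_le_t.
rewrite /tminus in tp; rewrite tp in tn_cvg.
have := u_cont tn t (fun n => (tnB n).1) tn_mono tn_cvg x.
apply: (closed_cvg _ (@closed_le _ (f x))); apply: nearW => n.
exact: below (tnB n).1 (tnB n).2 x.
Qed.

Lemma legal_le_Fs (t : R) : T t -> forall x, u t x <= f x.
Proof.
have [[woT _ _ _] _] := procT.
exact: (well_ordered_ind (P := fun r => forall x, u r x <= f x) woT
  legal_le_Fs_step).
Qed.

End LegalBelowFs.

Lemma topple_increment (g : V -> R) (x : V) :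
  (deg nbr x)%:R * (topple g x - g x) = Num.max 0 (s x + laplacian nbr g x - 1).
Proof. by rewrite /topple addrAC subrr add0r mulrC divfK ?pnatr_eq0 -?lt0n. Qed.

Definition parallel_toppling (n : nat) : V -> R := iter n topple (fun=> 0).

Lemma parallel_toppling_ge0 (n : nat) (x : V) : 0 <= parallel_toppling n x.
Proof.
by elim: n x => [|n IH] x //=; exact: le_trans (IH x) (le_topple _ _).
Qed.

Lemma parallel_toppling_nondecreasing (x : V) :
  {homo parallel_toppling^~ x : n m / (n <= m)%N >-> n <= m}.
Proof. by apply/nondecreasing_seqP => n; exact: le_topple. Qed.

Definition parallel_procedure (t : R) : V -> R :=
  parallel_toppling (Num.truncn t).

Lemma parallel_procedure_toppling :
  toppling_procedure (@naturals R) parallel_procedure.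
Proof.
split; split.
- exact: well_ordered_naturals.
- exact: closed_naturals.
- by exists 0%N.
- by move=> t [n ->]; rewrite /= ler0n.
- by move=> x; rewrite /parallel_procedure truncn0.
- by move=> t x _; exact: parallel_toppling_ge0.
- move=> _ _ x [a ->] [b ->]; rewrite ler_nat /parallel_procedure !natrK.
  exact: parallel_toppling_nondecreasing.
- move=> tn t tn_nat _ tn_cvg x; apply: cvg_near_cst.
  by apply: filterS (cvg_naturals_near_eq tn_nat tn_cvg) => n ->.
Qed.

Lemma parallel_procedure_legal : legal nbr s (@naturals R) parallel_procedure.
Proof.
move=> _ x [[|n] ->]; first by rewrite eqxx.
rewrite tminus_naturalsS /s_at /parallel_procedure !natrK /=.
by rewrite /topple addrAC subrr add0r.
Qed.

Lemma parallel_toppling_cvg (y : V) :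
  has_ubound (range (parallel_toppling^~ y)) ->
  parallel_toppling n y @[n --> \oo] --> sup (range (parallel_toppling^~ y)).
Proof.
move=> ub; apply: nondecreasing_cvgn => //.
exact: parallel_toppling_nondecreasing.
Qed.

Lemma parallel_toppling_sup_Fs :
  (forall y, has_ubound (range (parallel_toppling^~ y))) ->
  Fs nbr s (fun y => sup (range (parallel_toppling^~ y))).
Proof.
move=> ub; pose g y := sup (range (parallel_toppling^~ y)).
have par_cvg y := parallel_toppling_cvg (ub y).
split=> [y|x].
  exact: le_trans (parallel_toppling_ge0 0 y) (ub_le_sup (ub y) _).
have lhs_cvg : s x + laplacian nbr (parallel_toppling n) x - 1 @[n --> \oo]
    --> s x + laplacian nbr g x - 1.
  apply: cvgB; last exact: cvg_cst.
  apply: cvgD; first exact: cvg_cst.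
  by apply: cvg_big => [|y _]; [exact: add_continuous | apply: cvgB].
have rhs_cvg : (deg nbr x)%:R *
    (parallel_toppling n.+1 x - parallel_toppling n x) @[n --> \oo]
    --> (deg nbr x)%:R * (g x - g x).
  apply: cvgM; first exact: cvg_cst.
  by apply: cvgB => //; rewrite (cvg_shiftS (parallel_toppling^~ x)).
rewrite -subr_le0 -[0](mulr0 (deg nbr x)%:R) -(subrr (g x)).
apply: ler_cvg_to lhs_cvg rhs_cvg _; apply: nearW => n.
by rewrite /= topple_increment le_max lexx orbT.
Qed.

(* A vertex fires at least as much as the mass it receives from any neighbour:
   [par_n w <= sum_{y ~ z} par_n y <= deg z * par_{n+1} z - s z + 1]. *)
Lemma parallel_toppling_unbounded_nbr (z w : V) : w \in nbr z ->
  ~ has_ubound (range (parallel_toppling^~ w)) ->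
  ~ has_ubound (range (parallel_toppling^~ z)).
Proof.
move=> wz w_unb [M z_le_M]; apply: w_unb.
exists ((deg nbr z)%:R * M - s z + 1) => _ [n _ <-].
have w_le_sum :
    parallel_toppling n w <= \sum_(y <- nbr z) parallel_toppling n y.
  rewrite (big_rem w) //= lerDl.
  by apply: sumr_ge0 => y _; exact: parallel_toppling_ge0.
have inc := topple_increment (parallel_toppling n) z.
have : s z + laplacian nbr (parallel_toppling n) z - 1 <=
    Num.max 0 (s z + laplacian nbr (parallel_toppling n) z - 1).
  by rewrite le_max lexx orbT.
have : (deg nbr z)%:R * parallel_toppling n.+1 z <= (deg nbr z)%:R * M.
  by rewrite ler_pM2l ?ltr0n //; apply: z_le_M; exists n.+1.
rewrite -inc laplacianE /=; lra.
Qed.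

Lemma parallel_toppling_unbounded_path (z : V) (p : seq V) :
  path (fun a b => b \in nbr a) z p ->
  ~ has_ubound (range (parallel_toppling^~ (last z p))) ->
  ~ has_ubound (range (parallel_toppling^~ z)).
Proof.
elim: p z => [|w p IH] z //= /andP[wz wp] unb.
exact: parallel_toppling_unbounded_nbr wz (IH _ wp unb).
Qed.

Lemma odometer_le_parallel_final : graph_connected nbr -> forall x,
  (odometer nbr s x <= final_value (@naturals R) parallel_procedure x)%E.
Proof.
move=> conn x; set L := final_value _ _ x.
have par_le_L n : ((parallel_toppling n x)%:E <= L)%E.
  apply: ereal_sup_ubound; exists n%:R; first by exists n.
  by rewrite /parallel_procedure natrK.
have [ub|] := pselect (forall y, has_ubound (range (parallel_toppling^~ y))).
  apply: (@le_trans _ _ (sup (range (parallel_toppling^~ x)))%:E).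
    apply: ereal_inf_lbound.
    by exists (fun y => sup (range (parallel_toppling^~ y)));
      [exact: parallel_toppling_sup_Fs |].
  rewrite -ereal_sup_EFin //; last by exists (parallel_toppling 0 x), 0%N.
  by apply: ge_ereal_sup => _ [_ [n _ <-] <-].
(* unbounded somewhere, hence by connectedness unbounded at [x] *)
move=> /existsNP[y y_unb]; have [p [xp py]] := conn x y; rewrite -py in y_unb.
have x_unb := parallel_toppling_unbounded_path xp y_unb.
suff -> : L = +oo%E by rewrite leey.
case: L par_le_L => [r par_le_r||/(_ 0%N)] //.
by exfalso; apply: x_unb; exists r => _ [n _ <-]; rewrite -lee_fin.
Qed.

End Toppling.

Theorem lemma2p10 (R : realType) (V : eqType) (nbr : V -> seq V) (s : V -> R) :
  undirected_locally_finite nbr ->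
  graph_connected nbr ->
  (forall x, (0 < deg nbr x)%N) ->
  forall x : V,
    odometer nbr s x =
    ereal_sup [set e | exists (T : set R) (u : R -> V -> R),
                 [/\ toppling_procedure T u, legal nbr s T u &
                     e = final_value T u x]].
Proof.
move=> _ conn deg_gt0 x; apply/eqP; rewrite eq_le; apply/andP; split.
- apply: le_trans (odometer_le_parallel_final s deg_gt0 conn x) _.
  apply: ereal_sup_ubound; exists (@naturals R), (parallel_procedure nbr s).
  split=> //; first exact: parallel_procedure_toppling.
  exact: parallel_procedure_legal.
- apply: ge_ereal_sup => _ [T [u [procT legT ->]]].
  apply: ge_ereal_sup => _ [t Tt <-].
  apply: le_ereal_inf_tmp => _ [f Ff <-].
  by rewrite lee_fin (legal_le_Fs deg_gt0 procT legT Ff).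
Qed.
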